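(* Let $F\subset A^*$ be a recurrent set and let $X\subset F$ be an $F$-thin set. The following conditions are equivalent: (i) $X$ is an $F$-maximal bifix code; (ii) $X$ is a prefix code which is left $F$-complete; (ii') $X$ is a suffix code which is right $F$-complete; (iii) $X$ is both an $F$-maximal prefix code and an $F$-maximal suffix code.
   Context: $A$ is a finite alphabet, $A^*$ the free monoid, $1$ the empty word, $A^+=A^*\setminus\{1\}$. A set $F\subset A^*$ is factorial if it is nonempty and contains all factors of its elements; it is recurrent if it is factorial and for all $u,w\in F$ there is $v\in F$ with $uvw\in F$. A prefix code is a set $X\subset A^+$ in which no element is a proper prefix of another; a suffix code is defined symmetrically; a bifix code is both. For $X\subset F$: $X$ is an $F$-maximal prefix (resp. suffix, bifix) code if it is a prefix (resp. suffix, bifix) code not properly contained in any prefix (resp. suffix, bifix) code $Y\subset F$. $X$ is $F$-thin if some word of $F$ is not a factor of any word of $X$. $X$ is right $F$-complete if every word of $F$ is a prefix of a word of $X^*$, and left $F$-complete if every word of $F$ is a suffix of a word of $X^*$. *)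

From mathcomp Require Import all_boot.
Set Implicit Arguments. Unset Strict Implicit. Unset Printing Implicit Defensive.

Section Words.
Variable A : finType.
Definition lang := seq A -> Prop.

Definition subset_lang (X Y : lang) : Prop := forall w, X w -> Y w.

Definition factor (u w : seq A) : Prop := exists p s, w = p ++ u ++ s.
Definition is_prefix (u w : seq A) : Prop := exists s, w = u ++ s.
Definition is_suffix (u w : seq A) : Prop := exists p, w = p ++ u.

Definition factorial (F : lang) : Prop :=
  (exists w, F w) /\ forall w u, F w -> factor u w -> F u.

Definition recurrent (F : lang) : Prop :=
  factorial F /\ forall u w, F u -> F w -> exists v, F v /\ F (u ++ v ++ w).

Definition prefix_code (X : lang) : Prop :=
  (forall x, X x -> x <> [::]) /\
  (forall x y, X x -> X y -> is_prefix x y -> x = y).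
Definition suffix_code (X : lang) : Prop :=
  (forall x, X x -> x <> [::]) /\
  (forall x y, X x -> X y -> is_suffix x y -> x = y).
Definition bifix_code (X : lang) : Prop := prefix_code X /\ suffix_code X.

Definition F_maximal (code : lang -> Prop) (F X : lang) : Prop :=
  code X /\ subset_lang X F /\
  forall Y, code Y -> subset_lang Y F -> subset_lang X Y -> subset_lang Y X.

Definition F_maximal_prefix (F X : lang) := F_maximal prefix_code F X.
Definition F_maximal_suffix (F X : lang) := F_maximal suffix_code F X.
Definition F_maximal_bifix (F X : lang) := F_maximal bifix_code F X.

Definition F_thin (F X : lang) : Prop :=
  exists w, F w /\ forall x, X x -> ~ factor w x.

Definition star (X : lang) (w : seq A) : Prop :=
  exists l : seq (seq A), (forall x, x \in l -> X x) /\ w = flatten l.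

Definition right_F_complete (F X : lang) : Prop :=
  forall w, F w -> exists u, star X u /\ is_prefix w u.
Definition left_F_complete (F X : lang) : Prop :=
  forall w, F w -> exists u, star X u /\ is_suffix w u.
End Words.

From Pilot Require Import Defs.
From mathcomp Require Import all_boot zify boolp.
Set Implicit Arguments. Unset Strict Implicit. Unset Printing Implicit Defensive.

(** The implications among (ii), (ii') and (iii) rest on the fact that an
    F-maximal prefix code is the same as a right F-complete prefix code, on
    its mirror image, and on the key step: a left F-complete prefix code X is
    right F-complete and a suffix code.  For the latter fix u in F which is
    not a factor of any word of X.  For z in F beginning with u, greedily cut
    words of X off z from each of its first |u| positions; the remainders
    that are still proper prefixes of words of X form a set of at most |u|
    states, which contains the empty word by left completeness and cannot
    grow when z is extended.  For z with fewest states, reading any further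
    w in F maps states injectively onto states.  The empty state thus reaches
    a proper prefix of a word of X after w, so w is a prefix of X^*; and for
    y = p x in X, the empty state and a state reaching the empty state after p
    both reach the empty state after y, whence p is empty.
    Finally (i) and (iii) agree because, by recurrence, two witnesses of
    non-maximality as a prefix and as a suffix code combine into one word
    that could be added to a bifix code. *)

Lemma ex_argmin (T : Type) (P : T -> Prop) (f : T -> nat) :
  (exists t, P t) -> exists2 t, P t & forall t', P t' -> f t <= f t'.
Proof.
move=> [t0 Pt0].
have hn : exists n, `[< exists2 t, P t & f t = n >].
  by exists (f t0); apply/asboolP; exists t0.
case: (ex_minnP hn) => n /asboolP [t Pt <-] min_n.
by exists t => // t' Pt'; apply: min_n; apply/asboolP; exists t'.
Qed.

Lemma uniq_map_inj_in (T1 T2 : eqType) (f : T1 -> T2) (s : seq T1) :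
  uniq (map f s) -> {in s &, injective f}.
Proof.
elim: s => //= a s IHs /andP [fa_notin uniq_fs] x y.
rewrite !inE => /predU1P [-> | xs] /predU1P [-> | ys] // fxy.
- by case/negP: fa_notin; rewrite fxy map_f.
- by case/negP: fa_notin; rewrite -fxy map_f.
- exact: IHs.
Qed.

Section Words.
Variable A : finType.
Implicit Types (F X Y : lang A) (u v w x y z : seq A).

Lemma is_prefix_refl w : is_prefix w w.
Proof. by exists [::]; rewrite cats0. Qed.

Lemma is_prefix_trans u v w : is_prefix u v -> is_prefix v w -> is_prefix u w.
Proof. by move=> [s ->] [t ->]; exists (s ++ t); rewrite catA. Qed.

Lemma is_prefix_catr u z e : is_prefix u z -> is_prefix u (z ++ e).
Proof. by move=> uz; apply: is_prefix_trans uz _; exists e. Qed.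

Lemma is_prefix_size x y w :
  is_prefix x w -> is_prefix y w -> size x <= size y -> is_prefix x y.
Proof.
move=> [s ->] [t /(congr1 (take (size x)))] + le_xy.
rewrite take_size_cat // takel_cat // => def_x.
by exists (drop (size x) y); rewrite -{1}(cat_take_drop (size x) y) -def_x.
Qed.

Lemma is_prefix_common x y w :
  is_prefix x w -> is_prefix y w -> is_prefix x y \/ is_prefix y x.
Proof.
move=> xw yw; case: (leqP (size x) (size y)) => [le_xy | /ltnW le_yx].
- by left; exact: is_prefix_size xw yw le_xy.
- by right; exact: is_prefix_size yw xw le_yx.
Qed.

Lemma is_suffix_rev x y : is_suffix (rev x) (rev y) <-> is_prefix x y.
Proof.
split=> [[p def_y] | [s ->]]; last by exists (rev s); rewrite rev_cat.
by exists (rev p); rewrite -(revK y) def_y rev_cat revK.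
Qed.

Lemma is_prefix_rev x y : is_prefix (rev x) (rev y) <-> is_suffix x y.
Proof. by have := is_suffix_rev (rev x) (rev y); rewrite !revK; exact: iff_sym. Qed.

Lemma is_suffix_refl w : is_suffix w w.
Proof. by exists [::]. Qed.

Lemma is_suffix_trans u v w : is_suffix u v -> is_suffix v w -> is_suffix u w.
Proof. by move=> [p ->] [q ->]; exists (q ++ p); rewrite catA. Qed.

Lemma is_suffix_common x y w :
  is_suffix x w -> is_suffix y w -> is_suffix x y \/ is_suffix y x.
Proof.
move=> /is_prefix_rev xw /is_prefix_rev yw.
by case: (is_prefix_common xw yw) => /is_prefix_rev; [left | right].
Qed.

Lemma star_nil X : star X [::].
Proof. by exists [::]. Qed.

Lemma star1 X x : X x -> star X x.
Proof. by move=> Xx; exists [:: x]; rewrite /= cats0; split=> // y /[!inE] /eqP ->. Qed.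

Lemma star_cat X U V : star X U -> star X V -> star X (U ++ V).
Proof.
move=> [l [Xl ->]] [m [Xm ->]]; exists (l ++ m); rewrite flatten_cat.
by split=> // y; rewrite mem_cat => /orP [/Xl | /Xm].
Qed.

Lemma star_suffix_split X q z : star X (q ++ z) ->
  exists r U, [/\ z = r ++ U, star X U & r = [::] \/ exists2 x, X x & is_suffix r x].
Proof.
move=> [l [Xl]]; elim: l q Xl => [|x l IHl] q Xl /= def_qz.
  exists [::], [::]; split; [by case: q z def_qz => [[]|] | exact: star_nil | by left].
have Xx : X x by apply: Xl; exact: mem_head.
have Xl' : forall y, y \in l -> X y by move=> y yl; apply: Xl; rewrite inE yl orbT.
have qz : is_prefix q (q ++ z) by exists z.
case: (is_prefix_common qz (ex_intro _ _ def_qz)) => [[k def_x] | [k def_q]].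
- move/eqP: def_qz; rewrite def_x -catA eqseq_cat // => /andP [_ /eqP def_z].
  exists k, (flatten l); split=> //; last by right; exists x => //; exists q.
  by exists l.
- move/eqP: def_qz; rewrite def_q -catA eqseq_cat // => /andP [_ /eqP def_kz].
  exact: IHl Xl' def_kz.
Qed.

(** * Maximal codes and comparable words *)

(** [R] is [is_prefix] or [is_suffix]; [code_for is_prefix] is [prefix_code]
    and [code_for is_suffix] is [suffix_code]. *)
Section Codes.
Variable R : seq A -> seq A -> Prop.

Definition code_for X :=
  (forall x, X x -> x <> [::]) /\ forall x y, X x -> X y -> R x y -> x = y.

Definition comparable_to X w := exists2 x, X x & R x w \/ R w x.

Definition add_word X t : lang A := fun w => X w \/ w = t.

Lemma code_for_add X t :
  code_for X -> t <> [::] -> ~ comparable_to X t -> code_for (add_word X t).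
Proof.
move=> [neX injX] t0 Nt; split=> [x [/neX | ->] // | x y [Xx | ->] [Xy | ->] Rxy //].
- exact: injX.
- by case: Nt; exists x => //; left.
- by case: Nt; exists y => //; right.
Qed.

Hypothesis R_trans : forall u v w, R u v -> R v w -> R u w.
Hypothesis R_common : forall u v w, R u w -> R v w -> R u v \/ R v u.

Lemma comparable_to_ext X w t : R w t -> comparable_to X t -> comparable_to X w.
Proof.
move=> Rwt [x Xx [Rxt | Rtx]]; exists x => //; first exact: R_common Rxt Rwt.
by right; exact: R_trans Rwt Rtx.
Qed.

Hypothesis R_refl : forall w, R w w.

Lemma F_maximal_code_forP F X : code_for X -> subset_lang X F ->
  F_maximal code_for F X <-> forall w, F w -> w <> [::] -> comparable_to X w.
Proof.
move=> cX XF; split=> [[_ [_ maxX]] w Fw w0 | cmp].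
  apply: contrapT => Nw.
  have Xw : X w.
    apply: (maxX (add_word X w)); [exact: code_for_add | | by left | by right].
    by move=> v [/XF | ->].
  by apply: Nw; exists w => //; left.
split=> //; split=> // Y [neY injY] YF XY y Yy.
have [x Xx [Rxy | Ryx]] := cmp y (YF y Yy) (neY y Yy).
- by rewrite -(injY x y (XY x Xx) Yy Rxy).
- by rewrite (injY y x Yy (XY x Xx) Ryx).
Qed.

End Codes.

Lemma right_F_complete_comparable F X w : right_F_complete F X ->
  F w -> w <> [::] -> comparable_to (@is_prefix A) X w.
Proof.
move=> rcX Fw w0; have [_ [[[|x l] [Xl ->]] wU]] := rcX w Fw.
  by case: w Fw wU w0 => // a w _ [].
exists x; first by apply: Xl; exact: mem_head.
exact: is_prefix_common (ex_intro _ (flatten l) erefl) wU.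
Qed.

Lemma comparable_right_F_complete F X : Defs.factorial F -> prefix_code X ->
  (forall w, F w -> w <> [::] -> comparable_to (@is_prefix A) X w) ->
  right_F_complete F X.
Proof.
move=> [_ factF] [neX _] cmp w.
have [n] := ubnP (size w); elim: n w => // n IHn w lt_wn Fw.
have [-> | /eqP w0] := eqVneq w [::].
  by exists [::]; split; [exact: star_nil | exact: is_prefix_refl].
have [x Xx [[w' def_w] | wx]] := cmp w Fw w0; last first.
  by exists x; split; [exact: star1 | ].
have Fw' : F w' by apply: factF Fw _; exists x, [::]; rewrite cats0.
have x_pos : 0 < size x by rewrite lt0n size_eq0; apply/eqP/neX.
have lt_w'n : size w' < n by move: lt_wn; rewrite def_w size_cat; lia.
have [U [XU [s def_U]]] := IHn w' lt_w'n Fw'.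
exists (x ++ U); split; first exact: star_cat (star1 Xx) XU.
by exists s; rewrite def_w def_U catA.
Qed.

Lemma F_maximal_prefixP F X : Defs.factorial F -> subset_lang X F ->
  F_maximal_prefix F X <-> prefix_code X /\ right_F_complete F X.
Proof.
move=> factF XF; split=> [mX | [pX rcX]].
  have pX : prefix_code X := mX.1.
  split=> //; apply: comparable_right_F_complete => //.
  exact/(F_maximal_code_forP is_prefix_refl pX XF).
apply/(F_maximal_code_forP is_prefix_refl pX XF) => w.
exact: right_F_complete_comparable.
Qed.

Lemma F_maximal_bifix_prefix_suffix F X :
  F_maximal_prefix F X -> F_maximal_suffix F X -> F_maximal_bifix F X.
Proof.
move=> [pX [XF maxX]] [sX _]; split; first by split.
by split=> // Y [pY _]; exact: maxX.
Qed.

Lemma F_maximal_bifix_prefix_or_suffix F X : recurrent F ->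
  F_maximal_bifix F X -> F_maximal_prefix F X \/ F_maximal_suffix F X.
Proof.
move=> [_ recF] [[pX sX] [XF maxX]].
have witness R : (forall w, R w w) -> code_for R X -> ~ F_maximal (code_for R) F X ->
    exists w, [/\ F w, w <> [::] & ~ comparable_to R X w].
  move=> R_refl cX notmax; apply: contrapT => Nw; apply: notmax.
  apply/(F_maximal_code_forP R_refl cX XF) => w Fw w0.
  by apply: contrapT => Ncw; apply: Nw; exists w.
apply: contrapT => /not_orP [/(witness _ is_prefix_refl pX) [w [Fw w0 Nw]]].
move=> /(witness _ is_suffix_refl sX) [z [Fz _ Nz]].
have [v [_ Ft]] := recF w z Fw Fz.
set t := w ++ v ++ z in Ft.
have t0 : t <> [::] by rewrite /t; case: (w) w0.
have wt : is_prefix w t by exists (v ++ z).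
have zt : is_suffix z t by exists (w ++ v); rewrite /t catA.
have Ntp : ~ comparable_to (@is_prefix A) X t.
  by move/(comparable_to_ext is_prefix_trans is_prefix_common wt).
have Nts : ~ comparable_to (@is_suffix A) X t.
  by move/(comparable_to_ext is_suffix_trans is_suffix_common zt).
have Xt : X t.
  apply: (maxX (add_word X t)); [by split; exact: code_for_add | | by left | by right].
  by move=> s [/XF | ->].
by apply: Ntp; exists t => //; left; exact: is_prefix_refl.
Qed.

(** * Reversal *)

Definition revL X : lang A := fun w => X (rev w).

Lemma revLK : involutive revL.
Proof. by move=> X; apply: funext => w; rewrite /revL revK. Qed.

Lemma factor_rev u w : factor u w -> factor (rev u) (rev w).
Proof. by move=> [p [s ->]]; exists (rev s), (rev p); rewrite !rev_cat catA. Qed.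

Lemma factorial_rev F : Defs.factorial F -> Defs.factorial (revL F).
Proof.
move=> [[w0 Fw0] factF]; split; first by exists (rev w0); rewrite /revL revK.
by move=> w u Fw /factor_rev; exact: factF.
Qed.

Lemma recurrent_rev F : recurrent F -> recurrent (revL F).
Proof.
move=> [factF recF]; split; first exact: factorial_rev.
move=> u w Fu Fw; have [v [Fv Fwvu]] := recF _ _ Fw Fu.
exists (rev v); split; first by rewrite /revL revK.
by rewrite /revL !rev_cat revK -catA.
Qed.

Lemma F_thin_rev F X : F_thin F X -> F_thin (revL F) (revL X).
Proof.
move=> [w [Fw thinX]]; exists (rev w); split; first by rewrite /revL revK.
by move=> x Xx /factor_rev; rewrite revK; exact: thinX.
Qed.

Lemma star_rev X w : star X w -> star (revL X) (rev w).
Proof.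
move=> [l [Xl ->]]; exists (rev (map rev l)); split; last exact: rev_flatten.
by move=> x; rewrite mem_rev => /mapP [y yl ->]; rewrite /revL revK; exact: Xl.
Qed.

Lemma code_for_rev R R' X : (forall x y, R' (rev x) (rev y) <-> R x y) ->
  code_for R' (revL X) <-> code_for R X.
Proof.
move=> HR; split=> [[neX injX] | [neX injX]]; split.
- by move=> x Xx x0; apply: (neX (rev x)); [rewrite /revL revK | rewrite x0].
- move=> x y Xx Xy /HR Rxy; apply: (can_inj revK).
  by apply: injX; rewrite // /revL revK.
- by move=> x Xx x0; apply: (neX _ Xx); rewrite x0.
- move=> x y Xx Xy R'xy; rewrite -(revK x) -(revK y); congr rev.
  by apply: injX => //; apply/HR; rewrite !revK.
Qed.

Lemma prefix_code_rev X : prefix_code (revL X) <-> suffix_code X.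
Proof. exact: code_for_rev is_prefix_rev. Qed.

Lemma suffix_code_rev X : suffix_code (revL X) <-> prefix_code X.
Proof. exact: code_for_rev is_suffix_rev. Qed.

Lemma complete_rev R R' F X : (forall x y, R' (rev x) (rev y) <-> R x y) ->
  (forall w, revL F w -> exists u, star (revL X) u /\ R' w u) <->
  (forall w, F w -> exists u, star X u /\ R w u).
Proof.
move=> HR; split=> complX w Fw.
- have [|v [Xv Rv]] := complX (rev w); first by rewrite /revL revK.
  exists (rev v); split; first by rewrite -(revLK X); exact: star_rev.
  by apply/HR; rewrite revK.
- have [v [Xv Rv]] := complX (rev w) Fw.
  exists (rev v); split; first exact: star_rev.
  by move: Rv => /HR; rewrite revK.
Qed.

Lemma left_F_complete_rev F X :
  left_F_complete (revL F) (revL X) <-> right_F_complete F X.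
Proof. exact: complete_rev is_suffix_rev. Qed.

Lemma right_F_complete_rev F X :
  right_F_complete (revL F) (revL X) <-> left_F_complete F X.
Proof. exact: complete_rev is_prefix_rev. Qed.

Lemma F_maximal_rev (c c' : lang A -> Prop) F X :
  (forall Y, c' (revL Y) <-> c Y) -> F_maximal c' (revL F) (revL X) <-> F_maximal c F X.
Proof.
have rev_maximal (c1 c2 : lang A -> Prop) G Z : (forall Y, c2 (revL Y) <-> c1 Y) ->
    F_maximal c1 G Z -> F_maximal c2 (revL G) (revL Z).
  move=> Hc [cZ [ZG maxZ]]; split; first exact/Hc.
  split=> [w | Y cY YG ZY w Yw]; first exact: ZG.
  apply: (maxZ (revL Y)); last by rewrite /revL revK.
  - by apply/Hc; rewrite revLK.
  - by move=> v /YG; rewrite /revL revK.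
  - by move=> v Zv; apply: ZY; rewrite /revL revK.
move=> Hc; split=> [/(rev_maximal c' c) | ]; last exact: rev_maximal.
by rewrite !revLK; apply=> Y; have := Hc (revL Y); rewrite revLK; exact: iff_sym.
Qed.

Lemma F_maximal_suffix_rev F X :
  F_maximal_prefix (revL F) (revL X) <-> F_maximal_suffix F X.
Proof. exact: F_maximal_rev prefix_code_rev. Qed.

Lemma F_maximal_suffixP F X : Defs.factorial F -> subset_lang X F ->
  F_maximal_suffix F X <-> suffix_code X /\ left_F_complete F X.
Proof.
move=> factF XF.
have mP := F_maximal_prefixP (factorial_rev factF) (fun w => XF (rev w)).
split=> [/F_maximal_suffix_rev/mP [/prefix_code_rev ? /right_F_complete_rev ?] //|].
by move=> [/prefix_code_rev ? /right_F_complete_rev ?]; apply/F_maximal_suffix_rev/mP.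
Qed.

(** * Greedy parsing by a prefix code *)

Section Parsing.
Variable X : lang A.

(** [parse st w] is what remains of [st ++ w] when words of [X] are greedily
    cut off from the left while reading [w]. *)
Definition parse_step st a := if `[< X (rcons st a) >] then [::] else rcons st a.
Definition parse : seq A -> seq A -> seq A := foldl parse_step.

Definition proper_prefixes : lang A :=
  fun st => exists2 x, X x & is_prefix st x /\ st <> x.

Lemma parse_cat st b e : parse st (b ++ e) = parse (parse st b) e.
Proof. exact: foldl_cat. Qed.

Lemma proper_prefixes_parse_step st a :
  proper_prefixes (parse_step st a) -> proper_prefixes st.
Proof.
have proper s : is_prefix st (rcons st a ++ s) /\ st <> rcons st a ++ s.
  split; first by exists (a :: s); rewrite cat_rcons.
  by move/(congr1 size); rewrite size_cat size_rcons; lia.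
rewrite /parse_step; case: (asboolP (X (rcons st a))) => [Xsa _ | _ [x Xx [[s def_x] _]]].
  by exists (rcons st a) => //; rewrite -[rcons st a]cats0; exact: proper.
by exists x; rewrite // def_x; exact: proper.
Qed.

Lemma proper_prefixes_parse st e : proper_prefixes (parse st e) -> proper_prefixes st.
Proof. by elim: e st => //= a e IHe st /IHe /proper_prefixes_parse_step. Qed.

Lemma parse_star st b : exists2 U, star X U & st ++ b = U ++ parse st b.
Proof.
elim: b st => [|a b IHb] st; first by exists [::]; [exact: star_nil | rewrite cats0].
have [U XU def_b] := IHb (parse_step st a).
rewrite -cat_rcons /=; move: def_b; rewrite /parse_step.
case: (asboolP (X (rcons st a))) => [Xsa | _] def_b; last by exists U.
by exists (rcons st a ++ U); [exact: star_cat (star1 Xsa) XU | rewrite -catA -def_b].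
Qed.

Hypothesis pX : prefix_code X.

Lemma notin_code_rcons s a k : X (rcons s a ++ k) -> k <> [::] -> ~ X (rcons s a).
Proof.
move=> Xsak k0 Xsa; have := pX.2 _ _ Xsa Xsak (ex_intro _ k erefl).
move/(congr1 size); rewrite size_cat; case: k k0 {Xsak} => // b k _ /=; lia.
Qed.

Lemma parse_code_word s k : X (s ++ k) -> k <> [::] -> parse s k = [::].
Proof.
elim: k s => // a k IHk s Xsk _ /=; rewrite /parse_step.
case: k IHk Xsk => [|b k] IHk Xsk.
  by rewrite cats1 in Xsk; case: asboolP.
rewrite -cat_rcons in Xsk; case: asboolP => [Xsa | _]; last exact: IHk.
by case: (notin_code_rcons Xsk _ Xsa).
Qed.

Lemma parse_proper_prefix s p x : X (s ++ p ++ x) -> x <> [::] -> parse s p = s ++ p.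
Proof.
elim: p s => [|a p IHp] s Xspx x0 /=; first by rewrite cats0.
rewrite -cat_rcons /parse_step; rewrite /= -cat_rcons in Xspx.
case: asboolP => [Xsa | _]; last exact: IHp Xspx x0.
by case: (notin_code_rcons Xspx _ Xsa); case: (p); case: (x) x0.
Qed.

Lemma parse_star_nil U : star X U -> parse [::] U = [::].
Proof.
move=> [l [Xl ->]]; elim: l Xl => //= x l IHl Xl.
have Xx : X x by apply: Xl; exact: mem_head.
rewrite parse_cat (parse_code_word (s := [::]) Xx (pX.1 x Xx)).
by apply: IHl => y yl; apply: Xl; rewrite inE yl orbT.
Qed.

End Parsing.

(** * Live parsing states *)

Section LiveStates.
Variables (X : lang A) (n : nat).

Definition phase z c := parse X [::] (drop c z).

Definition live_states z :=
  undup [seq phase z c | c <- iota 0 n & `[< proper_prefixes X (phase z c) >]].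

Lemma live_statesP z st : st \in live_states z <->
  exists2 c, c < n & proper_prefixes X (phase z c) /\ st = phase z c.
Proof.
rewrite mem_undup; split=> [/mapP [c] | [c lt_cn [live_c ->]]].
  rewrite mem_filter mem_iota add0n => /andP [/asboolP live_c lt_cn] ->.
  by exists c.
by apply: map_f; rewrite mem_filter mem_iota add0n leq0n lt_cn !andbT; exact/asboolP.
Qed.

Lemma live_states_proper z st : st \in live_states z -> proper_prefixes X st.
Proof. by move=> /live_statesP [c _ [live_c ->]]. Qed.

Lemma phase_cat z e c : c < size z -> phase (z ++ e) c = parse X (phase z c) e.
Proof. by move=> lt_cz; rewrite /phase drop_cat lt_cz parse_cat. Qed.

Lemma live_states_cat z e : n <= size z ->
  {subset live_states (z ++ e) <= map (parse X ^~ e) (live_states z)}.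
Proof.
move=> le_nz st /live_statesP [c lt_cn []].
rewrite phase_cat ?(leq_trans lt_cn le_nz) // => live_ce ->.
apply: map_f; apply/live_statesP; exists c => //; split=> //.
exact: proper_prefixes_parse live_ce.
Qed.

Lemma size_live_states_cat z e : n <= size z ->
  size (live_states (z ++ e)) <= size (live_states z).
Proof.
move=> le_nz; rewrite -(size_map (parse X ^~ e) (live_states z)).
exact: uniq_leq_size (undup_uniq _) (live_states_cat (e := e) le_nz).
Qed.

Lemma live_states_cat_bij z e : n <= size z ->
  size (live_states z) <= size (live_states (z ++ e)) ->
  {in live_states z, forall st, parse X st e \in live_states (z ++ e)} /\
  {in live_states z &, injective (parse X ^~ e)}.
Proof.
move=> le_nz le_size; set M := map (parse X ^~ e) (live_states z).
have le_M : size M <= size (live_states (z ++ e)) by rewrite size_map.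
have [eq_size eq_mem] := uniq_min_size (undup_uniq _) (live_states_cat (e := e) le_nz) le_M.
split=> [st st_z | ]; first by rewrite eq_mem; exact: map_f.
by apply: uniq_map_inj_in; rewrite -(eq_uniq eq_size eq_mem) undup_uniq.
Qed.

End LiveStates.

(** * Left complete prefix codes *)

Section Synchronization.
Variables (F X : lang A) (u x0 : seq A).
Hypotheses (recF : recurrent F) (pX : prefix_code X) (lcX : left_F_complete F X).
Hypotheses (Fu : F u) (u_thin : forall x, X x -> ~ factor u x) (Xx0 : X x0).

Lemma nil_live_state z : F z -> is_prefix u z -> [::] \in live_states X (size u) z.
Proof.
move=> Fz uz; have [U [XU [q def_U]]] := lcX Fz.
have qz : star X (q ++ z) by rewrite -def_U.
have [r [V [def_z XV r_suf]]] := star_suffix_split qz.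
have lt_ru : size r < size u.
  rewrite ltnNge; apply/negP => le_ur.
  have [s def_r] := is_prefix_size uz (ex_intro _ V def_z) le_ur.
  case: r_suf => [r0 | [x Xx [p def_x]]].
  - apply: (u_thin Xx0); move: def_r; rewrite r0.
    by case: (u) => // _; exists [::], x0.
  - by apply: (u_thin Xx); exists p, s; rewrite def_x def_r.
have phase_r : phase X z (size r) = [::].
  by rewrite /phase def_z drop_size_cat // parse_star_nil.
apply/live_statesP; exists (size r) => //; rewrite phase_r; split=> //.
exists x0 => //; split; first by exists x0.
by move=> e; apply: (pX.1 _ Xx0); rewrite -e.
Qed.

(** [z] extends a word of [F] beginning with [u] with the fewest live states,
    so reading [w] after [z] loses none of them. *)
Lemma synchronizing_context w : F w -> exists z, [/\ F (z ++ w), is_prefix u z,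
  {in live_states X (size u) z, forall st, parse X st w \in live_states X (size u) (z ++ w)} &
  {in live_states X (size u) z &, injective (parse X ^~ w)}].
Proof.
move=> Fw; pose N z := size (live_states X (size u) z).
have [z0 [Fz0 uz0] min_z0] :=
  ex_argmin N (ex_intro (fun z => F z /\ is_prefix u z) u (conj Fu (is_prefix_refl u))).
have [v [_ Fz0vw]] := recF.2 z0 w Fz0 Fw.
have Fzw : F ((z0 ++ v) ++ w) by rewrite -catA.
have uz : is_prefix u (z0 ++ v) := is_prefix_catr v uz0.
have [s def_z0] := uz0.
have le_uz0 : size u <= size z0 by rewrite def_z0 size_cat leq_addr.
have le_uz : size u <= size (z0 ++ v) by rewrite size_cat (leq_trans le_uz0) ?leq_addr.
have [tot inj] : _ /\ _ := live_states_cat_bij (e := w) le_uz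
  (leq_trans (size_live_states_cat X v le_uz0) (min_z0 _ (conj Fzw (is_prefix_catr w uz)))).
by exists (z0 ++ v).
Qed.

Lemma left_complete_right_complete : right_F_complete F X.
Proof.
move=> w Fw; have [z [Fzw uz tot _]] := synchronizing_context Fw.
have Fz : F z by apply: recF.1.2 Fzw _; exists [::], w.
have [x Xx [[s def_x] _]] := live_states_proper (tot _ (nil_live_state Fz uz)).
have [U XU def_w] := parse_star X [::] w.
exists (U ++ x); split; first exact: star_cat XU (star1 Xx).
by exists s; rewrite def_x catA -def_w.
Qed.

Lemma left_complete_suffix_code : subset_lang X F -> suffix_code X.
Proof.
move=> XF; split=> [|x y Xx Xy [p def_y]]; first exact: pX.1.
have [z [Fzy uz _ inj]] := synchronizing_context (XF y Xy).
have factF := recF.1.2.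
have Fz : F z by apply: factF Fzy _; exists [::], y.
have Fzp : F (z ++ p) by apply: factF Fzy _; exists [::], x; rewrite def_y catA.
have le_uz : size u <= size z by case: uz => t ->; rewrite size_cat leq_addr.
have x_ne : x <> [::] := pX.1 x Xx.
have /(live_states_cat (e := p) le_uz) /mapP [st st_z nil_p] :=
  nil_live_state Fzp (is_prefix_catr p uz).
have Xpx : X (p ++ x) by rewrite -def_y.
have parse_y : parse X st y = parse X [::] y.
  rewrite def_y parse_cat -nil_p (parse_code_word pX (s := [::]) Xx x_ne).
  by rewrite (parse_code_word pX (s := [::]) Xpx (pX.1 _ Xpx)).
have st_nil : st = [::] by apply: inj => //; exact: nil_live_state.
move: nil_p; rewrite st_nil (parse_proper_prefix pX (s := [::]) Xpx x_ne) /=.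
by rewrite def_y => <-.
Qed.

End Synchronization.

Lemma prefix_left_complete F X : recurrent F -> subset_lang X F -> F_thin F X ->
  prefix_code X -> left_F_complete F X -> suffix_code X /\ right_F_complete F X.
Proof.
move=> recF XF [u [Fu u_thin]] pX lcX.
have [[x0 Xx0] | X0] := EM (exists x, X x).
  split; first exact: (left_complete_suffix_code recF pX lcX Fu u_thin Xx0 XF).
  exact: (left_complete_right_complete recF pX lcX Fu u_thin Xx0).
(* With X empty, left completeness leaves only the empty word in F. *)
have noX x : ~ X x by move=> Xx; apply: X0; exists x.
split; first by split=> [x /noX | x y /noX].
move=> w Fw; have [U [[[|x l] [Xl ->]] [p]]] := lcX w Fw; last first.
  by case: (noX x); apply: Xl; exact: mem_head.
move=> /(congr1 size)/esym/eqP; rewrite size_cat addn_eq0 !size_eq0 => /andP [_ /eqP ->].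
by exists [::]; split; [exact: star_nil | exact: is_prefix_refl].
Qed.

Lemma suffix_right_complete F X : recurrent F -> subset_lang X F -> F_thin F X ->
  suffix_code X -> right_F_complete F X -> prefix_code X /\ left_F_complete F X.
Proof.
move=> recF XF thinX /prefix_code_rev pX /left_F_complete_rev lcX.
by have [/suffix_code_rev ? /right_F_complete_rev ?] :=
  prefix_left_complete (recurrent_rev recF) (fun w => XF (rev w)) (F_thin_rev thinX) pX lcX.
Qed.

End Words.

Theorem mainTheorem1 (A : finType) (F X : lang A)
  (hF : recurrent F) (hXF : subset_lang X F) (hthin : F_thin F X) :
  (F_maximal_bifix F X <-> prefix_code X /\ left_F_complete F X) /\
  (F_maximal_bifix F X <-> suffix_code X /\ right_F_complete F X) /\
  (F_maximal_bifix F X <-> F_maximal_prefix F X /\ F_maximal_suffix F X).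
Proof.
have mP := F_maximal_prefixP hF.1 hXF.
have mS := F_maximal_suffixP hF.1 hXF.
have ii_iii : prefix_code X /\ left_F_complete F X <->
    F_maximal_prefix F X /\ F_maximal_suffix F X.
  split=> [[pX lcX] | [/mP [pX _] /mS [_ lcX]]] //.
  have [sX rcX] := prefix_left_complete hF hXF hthin pX lcX.
  by split; [apply/mP | apply/mS].
have ii'_iii : suffix_code X /\ right_F_complete F X <->
    F_maximal_prefix F X /\ F_maximal_suffix F X.
  split=> [[sX rcX] | [/mP [_ rcX] /mS [sX _]]] //.
  have [pX lcX] := suffix_right_complete hF hXF hthin sX rcX.
  by split; [apply/mP | apply/mS].
have i_iii : F_maximal_bifix F X <-> F_maximal_prefix F X /\ F_maximal_suffix F X.
  split=> [bX | [mpX msX]]; last exact: F_maximal_bifix_prefix_suffix.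
  have [[pX sX] _] := bX.
  case: (F_maximal_bifix_prefix_or_suffix hF bX) => [/mP [_ rcX] | /mS [_ lcX]].
  - by apply/ii'_iii.
  - by apply/ii_iii.
split; last split.
- exact: iff_trans i_iii (iff_sym ii_iii).
- exact: iff_trans i_iii (iff_sym ii'_iii).
- exact: i_iii.
Qed.
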